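(* Let $Y$ be a real Hilbert space, let $Q\colon Y\to Y$ be a bounded linear operator, let $\lambda>0$, and suppose that $\langle y, Qy\rangle+\lambda\|y\|^2\le 0$ for all $y\in Y$. Then $Q$ touches every maximally monotone multifunction on $Y$; that is, for every maximally monotone $M\colon Y\rightrightarrows Y$, the set $G(M)\cap G(Q)$ is a singleton in $Y\times Y$.
   Context: For a multifunction (or function) $M$ on $Y$, $G(M)=\{(y,q)\in Y\times Y: q\in My\}$ denotes its graph. Two multifunctions $M,Q$ on $Y$ are said to touch if $G(M)\cap G(Q)$ is a singleton. *)

From HB Require Import structures.
From mathcomp Require Import all_boot all_order all_algebra.
From mathcomp Require Import all_classical all_reals all_analysis.
Set Implicit Arguments. Unset Strict Implicit. Unset Printing Implicit Defensive.
Import Order.TTheory GRing.Theory Num.Theory.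
Import numFieldNormedType.Exports.
Local Open Scope classical_set_scope.
Local Open Scope ring_scope.

Definition hilbert_inner (R : realType) (Y : completeNormedModType R)
    (ip : Y -> Y -> R) : Prop :=
  [/\ forall x y, ip x y = ip y x,
      forall a x y z, ip (a *: x + y) z = a * ip x z + ip y z
    & forall x, ip x x = `|x| ^+ 2].

Definition bounded_op (R : realType) (Y : completeNormedModType R)
    (Q : Y -> Y) : Prop :=
  exists C : R, forall y, `|Q y| <= C * `|y|.

Definition graph (Y : Type) (M : Y -> set Y) : set (Y * Y) :=
  [set p | M p.1 p.2].
Definition fgraph (Y : Type) (f : Y -> Y) : set (Y * Y) :=
  [set p | p.2 = f p.1].

Definition monotone_mf (R : realType) (Y : completeNormedModType R)
    (ip : Y -> Y -> R) (M : Y -> set Y) : Prop :=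
  forall x u y v, M x u -> M y v -> 0 <= ip (x - y) (u - v).

Definition maximally_monotone (R : realType) (Y : completeNormedModType R)
    (ip : Y -> Y -> R) (M : Y -> set Y) : Prop :=
  monotone_mf ip M /\
  forall M' : Y -> set Y, monotone_mf ip M' ->
    graph M `<=` graph M' -> graph M' = graph M.

Definition touch_fun (Y : Type) (M : Y -> set Y) (f : Y -> Y) : Prop :=
  exists p : Y * Y, graph M `&` fgraph f = [set p].

From HB Require Import structures.
From mathcomp Require Import all_boot all_order all_algebra.
From mathcomp Require Import all_classical all_reals all_analysis.
From mathcomp Require Import ring lra.
Import Order.TTheory GRing.Theory Num.Theory.
Import numFieldNormedType.Exports.
Local Open Scope classical_set_scope.
Local Open Scope ring_scope.

(* Uniqueness: two touching points x, y give
   0 <= <x - y, Q x - Q y> <= - lam |x - y|^2.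
   Existence: by Minty's theorem the resolvent J of c M (J z = x iff
   (z - x) / c lies in M x) is everywhere defined and nonexpansive, and for
   c = lam / (C^2 + lam^2), with C a bound of Q, the map x |-> x + c Q x is a
   (1 - c lam / 2)-contraction; the Banach fixed point of x |-> J (x + c Q x)
   is a touching point.
   Minty's theorem is proved variationally: the function
   F(x, u) = sup_{(y, v) in G(M)} (<x, v> + <y, u> - <y, v>) + (|x|^2 + |u|^2) / 2
   is strongly convex, so its minimizing sequences are Cauchy; at a minimizer
   (a, b) the first-order optimality condition makes (-b, -a) monotonically
   related to G(M), hence in G(M) by maximality, and then forces b = -a. *)

Set Implicit Arguments. Unset Strict Implicit.

Lemma ge0_perturb (R : realType) (K P : R) :
  0 <= P -> (forall t, 0 < t -> t <= 1 -> 0 <= K + t * P) -> 0 <= K.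
Proof.
move=> P_ge0 h; rewrite leNgt; apply/negP => K_lt0.
have d_gt0 : 0 < P - K + 1 by lra.
pose t := - K / (P - K + 1).
have t_gt0 : 0 < t by rewrite divr_gt0 //; lra.
have t_le1 : t <= 1 by rewrite ler_pdivrMr //; lra.
have := h t t_gt0 t_le1.
have -> : K + t * P = K * (1 - K) / (P - K + 1) by rewrite /t; field; lra.
rewrite pmulr_lge0 ?invr_gt0 //; nra.
Qed.

Lemma contraction_fixed_point (R : realType) (X : completeNormedModType R)
    (f : X -> X) (q : R) :
  0 <= q -> q < 1 -> (forall x y, `|f x - f y| <= q * `|x - y|) ->
  exists x, f x = x.
Proof.
move=> q_ge0 q_lt1 f_lip.
pose fT := @mkfun _ _ setT setT f (fun _ _ => I).
have [|||x _ fx] := @banach_fixed_point R X setT fT.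
- by exists (NngNum q_ge0); split=> // -[x y] _; exact: f_lip.
- exact: closedT.
- by exists 0.
by exists x; rewrite {2}fx.
Qed.

Lemma cvgn_of_sqr_dist_le (R : realType) (Y : completeNormedModType R)
    (z : nat -> Y) (K : R) :
  0 <= K -> (forall n k, `|z n - z k| ^+ 2 <= K * (n.+1%:R^-1 + k.+1%:R^-1)) ->
  cvgn z.
Proof.
move=> K_ge0 zK; apply/cauchy_cvgP; apply: cauchy_exP => e e_gt0.
have e2_gt0 : 0 < e ^+ 2 by rewrite exprn_gt0.
pose N := Num.Def.archi_bound (2 * K / e ^+ 2).
have KN : 2 * K < e ^+ 2 * N.+1%:R.
  have : 2 * K / e ^+ 2 < N%:R.
    by apply/archi_boundP/divr_ge0; [exact: mulr_ge0 | exact: sqr_ge0].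
  rewrite ltr_pdivrMr // => /lt_le_trans; apply.
  by rewrite mulrC ler_wpM2l ?ltW // ltr_nat.
exists (z N); exists N => // n /= Nn; rewrite -ball_normE /=.
rewrite -(@ltr_pXn2r _ 2) ?nnegrE ?normr_ge0 ?(ltW e_gt0) //.
apply: le_lt_trans (zK N n) _.
have n_le : n.+1%:R^-1 <= N.+1%:R^-1 :> R.
  by rewrite lef_pV2 ?posrE ?ltr0Sn // ler_nat ltnS.
apply: (@le_lt_trans _ _ (2 * K / N.+1%:R)).
  have := ler_wpM2l K_ge0 n_le.
  by set a := N.+1%:R^-1; set b := n.+1%:R^-1; lra.
by rewrite ltr_pdivrMr ?ltr0Sn.
Qed.

Section InnerProduct.
Variables (R : realType) (Y : completeNormedModType R) (ip : Y -> Y -> R).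
Hypothesis ipH : hilbert_inner ip.

Lemma ipC x y : ip x y = ip y x. Proof. by case: ipH. Qed.

Lemma ip_norm x : ip x x = `|x| ^+ 2. Proof. by case: ipH. Qed.

Lemma ip0l z : ip 0 z = 0.
Proof.
by case: ipH => _ lin _; have := lin 1 0 0 z; rewrite scale1r addr0 mul1r; lra.
Qed.

Lemma ipDl x y z : ip (x + y) z = ip x z + ip y z.
Proof. by case: ipH => _ lin _; rewrite -[x]scale1r lin mul1r scale1r. Qed.

Lemma ipZl a x z : ip (a *: x) z = a * ip x z.
Proof. by case: ipH => _ lin _; rewrite -[a *: x]addr0 lin ip0l addr0. Qed.

Lemma ipNl x z : ip (- x) z = - ip x z.
Proof. by rewrite -scaleN1r ipZl mulN1r. Qed.

Lemma ipDr x y z : ip z (x + y) = ip z x + ip z y.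
Proof. by rewrite !(ipC z) ipDl. Qed.

Lemma ipZr a x z : ip z (a *: x) = a * ip z x.
Proof. by rewrite !(ipC z) ipZl. Qed.

Lemma ipNr x z : ip z (- x) = - ip z x.
Proof. by rewrite !(ipC z) ipNl. Qed.

Definition ipE := (ipDl, ipDr, ipZl, ipZr, ipNl, ipNr).

Lemma ipxx_ge0 x : 0 <= ip x x.
Proof. by rewrite ip_norm sqr_ge0. Qed.

Lemma ipxx_le0_eq0 x : ip x x <= 0 -> x = 0.
Proof.
rewrite ip_norm => x2_le0; apply/normr0_eq0/eqP.
by rewrite -sqrf_eq0 eq_le x2_le0 sqr_ge0.
Qed.

Lemma ip_le_mean x y : 2 * ip x y <= ip x x + ip y y.
Proof. by have := ipxx_ge0 (x - y); rewrite !ipE (ipC y x); lra. Qed.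

Lemma ip_polar x y : ip x y = (`|x + y| ^+ 2 - `|x| ^+ 2 - `|y| ^+ 2) / 2.
Proof. by rewrite -!ip_norm !ipE (ipC y x); field. Qed.

Lemma cvg_ip (xs ws : nat -> Y) (x w : Y) :
  xs n @[n --> \oo] --> x -> ws n @[n --> \oo] --> w ->
  ip (xs n) (ws n) @[n --> \oo] --> ip x w.
Proof.
move=> xs_x ws_w; rewrite ip_polar !expr2.
under eq_fun do rewrite ip_polar !expr2.
apply: cvgM; last exact: cvg_cst.
have xws : xs n + ws n @[n --> \oo] --> x + w by apply: cvgD.
by apply: cvgB; [apply: cvgB|]; apply: cvgM; apply: cvg_norm.
Qed.

Lemma norm_add_scale_le (w q : Y) (c C lam : R) :
  0 <= c -> c * lam <= 1 -> c * C ^+ 2 <= lam ->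
  ip w q + lam * `|w| ^+ 2 <= 0 -> `|q| <= C * `|w| ->
  `|w + c *: q| <= (1 - c * lam / 2) * `|w|.
Proof.
move=> c_ge0 c_lam c_C wq_le q_le.
have k_ge0 : 0 <= 1 - c * lam / 2 by lra.
have q2_le : `|q| ^+ 2 <= C ^+ 2 * `|w| ^+ 2.
  by rewrite -exprMn lerXn2r ?nnegrE // (le_trans _ q_le).
rewrite -(@ler_pXn2r _ 2) ?nnegrE ?normr_ge0 ?mulr_ge0 // exprMn.
rewrite -!ip_norm in wq_le q2_le *; rewrite !ipE (ipC q w).
have W_ge0 := ipxx_ge0 w.
have := ler_wpM2l c_ge0 wq_le.
have := ler_wpM2l c_ge0 (ler_wpM2l c_ge0 q2_le).
have := ler_wpM2l c_ge0 (ler_wpM2r W_ge0 c_C).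
have := mulr_ge0 (sqr_ge0 (c * lam)) W_ge0.
lra.
Qed.

End InnerProduct.

Section Minty.
Variables (R : realType) (Y : completeNormedModType R) (ip : Y -> Y -> R).
Variable M : Y -> set Y.
Hypotheses (ipH : hilbert_inner ip) (MM : maximally_monotone ip M).

Lemma maximally_monotone_related a b :
  (forall y v, M y v -> 0 <= ip (a - y) (b - v)) -> M a b.
Proof.
case: MM => M_mono M_max ab_rel.
pose Mab x := [set w | M x w \/ (x = a /\ w = b)].
have Mab_mono : monotone_mf ip Mab.
  move=> x u y v [Mxu|[-> ->]] [Myv|[-> ->]].
  - exact: M_mono.
  - have := ab_rel _ _ Mxu.
    by rewrite -(opprB a) -(opprB b) (ipNl ipH) (ipNr ipH) opprK.
  - exact: ab_rel.
  - by rewrite subrr (ip0l ipH).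
have /(congr1 (@^~ (a, b))) : graph Mab = graph M.
  by apply: M_max => // p Mp; left.
by rewrite /graph /= => <-; right.
Qed.

Lemma maximally_monotone_graph_neq0 : exists y v, M y v.
Proof.
case: (pselect (exists y v, M y v)) => // M0; exists 0, 0.
by apply: maximally_monotone_related => y v Myv; exfalso; apply: M0; exists y, v.
Qed.

(* [fitzq_le c x u] means F(x, u) <= c, where F is the Fitzpatrick function
   [sup_{(y, v) in G(M)} fitz y v _ _] of [M] plus [quad]. *)
Let quad (x u : Y) := (ip x x + ip u u) / 2.
Let fitz (y v x u : Y) := ip x v + ip y u - ip y v.
Let fitzq_le (c : R) (x u : Y) :=
  forall y v, M y v -> fitz y v x u + quad x u <= c.

Lemma ip_add_quad_ge0 x u : 0 <= ip x u + quad x u.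
Proof.
by have := ipxx_ge0 ipH (x + u); rewrite /quad !(ipE ipH) (ipC ipH u x); lra.
Qed.

Lemma ip_subE_fitz x u y v : ip (x - y) (u - v) = ip x u - fitz y v x u.
Proof. by rewrite /fitz !(ipE ipH); ring. Qed.

Lemma fitz_le_ip x u y v : M x u -> M y v -> fitz y v x u <= ip x u.
Proof.
by move=> Mxu Myv; have := MM.1 _ _ _ _ Mxu Myv; rewrite ip_subE_fitz; lra.
Qed.

Lemma fitzq_le_ge0 c x u : fitzq_le c x u -> 0 <= c.
Proof.
move=> xu_le; rewrite leNgt; apply/negP => c_lt0.
have Mxu : M x u.
  apply: maximally_monotone_related => y v Myv; rewrite ip_subE_fitz.
  by have := xu_le y v Myv; have := ip_add_quad_ge0 x u; lra.
by have := xu_le x u Mxu; have := ip_add_quad_ge0 x u; rewrite /fitz; lra.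
Qed.

Lemma fitzq_le_midpoint c c' x u x' u' :
  fitzq_le c x u -> fitzq_le c' x' u' ->
  fitzq_le ((c + c') / 2 - (ip (x - x') (x - x') + ip (u - u') (u - u')) / 8)
    (2^-1 *: (x + x')) (2^-1 *: (u + u')).
Proof.
move=> xu_le xu'_le y v Myv; have := xu_le y v Myv; have := xu'_le y v Myv.
by rewrite /fitz /quad !(ipE ipH) (ipC ipH x' x) (ipC ipH u' u); lra.
Qed.

Lemma fitzq_le_lim m (xs us : nat -> Y) a b :
  (forall n, fitzq_le (m + n.+1%:R^-1) (xs n) (us n)) ->
  xs n @[n --> \oo] --> a -> us n @[n --> \oo] --> b -> fitzq_le m a b.
Proof.
move=> xsus_le xs_a us_b y v Myv; apply/ler_addgt0Pr => e e_gt0.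
have : fitz y v (xs n) (us n) + quad (xs n) (us n) @[n --> \oo] -->
       fitz y v a b + quad a b.
  apply: cvgD; first apply: cvgB; first apply: cvgD.
  - exact: (cvg_ip ipH xs_a (cvg_cst v)).
  - exact: (cvg_ip ipH (cvg_cst y) us_b).
  - exact: cvg_cst.
  - by apply: cvgM; [apply: cvgD; apply: cvg_ip|exact: cvg_cst].
move/cvgr_to_le; apply.
pose N := Num.Def.archi_bound e^-1.
have eN : e^-1 < N%:R by apply/archi_boundP; rewrite invr_ge0 ltW.
exists N => // n /= Nn; apply: le_trans (xsus_le n y v Myv) _; rewrite lerD2l.
rewrite -[e]invrK lef_pV2 ?posrE ?invr_gt0 ?ltr0Sn //.
by rewrite (le_trans (ltW eN)) // ler_nat leqW.
Qed.

Lemma fitzq_inf : exists m, (forall c x u, fitzq_le c x u -> m <= c) /\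
  forall e, 0 < e -> exists x u, fitzq_le (m + e) x u.
Proof.
pose A := [set c | exists x u, fitzq_le c x u].
have [y0 [v0 My0v0]] := maximally_monotone_graph_neq0.
have A0 : A (ip y0 v0 + quad y0 v0).
  by exists y0, v0 => y v Myv; have := fitz_le_ip My0v0 Myv; lra.
have A_inf : has_inf A.
  split; first by exists (ip y0 v0 + quad y0 v0).
  by exists 0 => c [x [u]]; apply: fitzq_le_ge0.
exists (inf A); split=> [c x u xu_le|e e_gt0].
  by apply: (ge_inf A_inf.2); exists x, u.
have [c [x [u xu_le]] c_lt] := inf_adherent e_gt0 A_inf.
by exists x, u => y v Myv; apply: le_trans (xu_le y v Myv) (ltW c_lt).
Qed.

Lemma fitzq_minimizer : exists m a b,
  fitzq_le m a b /\ forall c x u, fitzq_le c x u -> m <= c.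
Proof.
have [m [m_min m_approx]] := fitzq_inf.
have /choice[p p_le] :
    forall n, exists p : Y * Y, fitzq_le (m + n.+1%:R^-1) p.1 p.2.
  move=> n; have [|x [u ?]] := m_approx n.+1%:R^-1; first by rewrite invr_gt0.
  by exists (x, u).
pose xs n := (p n).1; pose us n := (p n).2.
have dist_le n k : ip (xs n - xs k) (xs n - xs k) + ip (us n - us k) (us n - us k)
    <= 4 * (n.+1%:R^-1 + k.+1%:R^-1).
  have := m_min _ _ _ (fitzq_le_midpoint (p_le n) (p_le k)).
  by set a := n.+1%:R^-1; set b := k.+1%:R^-1; lra.
have [xs_cvg us_cvg] : cvgn xs /\ cvgn us.
  split; apply: (@cvgn_of_sqr_dist_le _ _ _ 4) => // n k; rewrite -(ip_norm ipH);
    have := dist_le n k; have := ipxx_ge0 ipH (xs n - xs k);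
    have := ipxx_ge0 ipH (us n - us k);
    by set a := n.+1%:R^-1; set b := k.+1%:R^-1; lra.
exists m, (limn xs), (limn us); split=> //.
exact: fitzq_le_lim p_le xs_cvg us_cvg.
Qed.

Lemma fitzq_min_variational m a b :
  fitzq_le m a b -> (forall c x u, fitzq_le c x u -> m <= c) ->
  forall y v, M y v -> m + quad a b <= ip a y + ip b v + ip y v.
Proof.
move=> ab_le m_min y v Myv; rewrite -subr_ge0.
apply: (@ge0_perturb _ _ (quad (y - a) (v - b))).
  by rewrite divr_ge0 ?addr_ge0 ?(ipxx_ge0 ipH).
move=> t t_gt0 t_le1; rewrite -(pmulr_rge0 _ t_gt0).
pose xt := a + t *: (y - a); pose ut := b + t *: (v - b).
have : fitzq_le ((1 - t) * (m - quad a b) + t * ip y v + quad xt ut) xt ut.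
  move=> y' v' My'v'; rewrite lerD2r.
  have -> : fitz y' v' xt ut = (1 - t) * fitz y' v' a b + t * fitz y' v' y v.
    by rewrite /fitz !(ipE ipH); ring.
  have := ler_wpM2l (ltW t_gt0) (fitz_le_ip Myv My'v').
  have : (1 - t) * fitz y' v' a b <= (1 - t) * (m - quad a b).
    by apply: ler_wpM2l; [lra | have := ab_le y' v' My'v'; lra].
  lra.
by move/m_min; rewrite /quad !(ipE ipH) (ipC ipH y a) (ipC ipH v b); lra.
Qed.

Theorem minty : exists x, M x (- x).
Proof.
have [m [a [b [ab_le m_min]]]] := fitzq_minimizer.
have m_ge0 := fitzq_le_ge0 ab_le.
have ab_var := fitzq_min_variational ab_le m_min.
have Mba : M (- b) (- a).
  apply: maximally_monotone_related => y v Myv.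
  have := ab_var y v Myv; have := ip_add_quad_ge0 a b.
  by rewrite /quad !(ipE ipH) (ipC ipH y a) (ipC ipH b a); lra.
have ab0 : a + b = 0.
  apply: (ipxx_le0_eq0 ipH); have := ab_var _ _ Mba.
  by rewrite /quad !(ipE ipH) (ipC ipH b a); lra.
have b_eq : b = - a by apply/eqP; rewrite -addr_eq0 addrC ab0.
by exists a; move: Mba; rewrite b_eq opprK.
Qed.

End Minty.

Section Resolvent.
Variables (R : realType) (Y : completeNormedModType R) (ip : Y -> Y -> R).
Variable M : Y -> set Y.
Hypotheses (ipH : hilbert_inner ip) (MM : maximally_monotone ip M).

Lemma maximally_monotone_shift_scale (s : R) (z : Y) : 0 < s ->
  maximally_monotone ip (fun x => [set w | M x (s *: (z + w))]).
Proof.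
case: MM => M_mono M_max s_gt0.
have ip_shift_scale r x y w w' :
    ip (x - y) (r *: (z + w) - r *: (z + w')) = r * ip (x - y) (w - w').
  by rewrite !(ipE ipH); ring.
split=> [x w y w' /= Mxw Myw'|M' M'_mono M'_ext].
  by have := M_mono _ _ _ _ Mxw Myw'; rewrite ip_shift_scale pmulr_rge0.
pose M'' x := [set u | M' x (s^-1 *: u - z)].
have M''_mono : monotone_mf ip M''.
  move=> x u y u' /= M'xu M'yu'; have := M'_mono _ _ _ _ M'xu M'yu'.
  have -> : ip (x - y) (u - u') =
      s * ip (x - y) (s^-1 *: u - z - (s^-1 *: u' - z)).
    by rewrite !(ipE ipH); field; rewrite gt_eqF.
  by rewrite pmulr_rge0.
have M''_ext : graph M `<=` graph M''.
  move=> [x u] /= Mxu; apply: (M'_ext (x, s^-1 *: u - z)) => /=.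
  by rewrite /graph /= (addrC z) subrK scalerA mulfV ?gt_eqF // scale1r.
have M''E := M_max M'' M''_mono M''_ext.
apply/seteqP; split=> // -[x w] /= M'xw.
have : graph M'' (x, s *: (z + w)).
  by rewrite /graph /M'' /= scalerA mulVf ?gt_eqF // scale1r (addrC z) addrK.
by rewrite M''E.
Qed.

Lemma resolvent_exists (c : R) :
  0 < c -> forall z, exists x, M x (c^-1 *: (z - x)).
Proof.
move=> c_gt0 z.
have cV_gt0 : 0 < c^-1 by rewrite invr_gt0.
by have /(minty ipH)[x Mx] := maximally_monotone_shift_scale z cV_gt0; exists x.
Qed.

Lemma resolvent_nonexpansive (c : R) x1 x2 z1 z2 :
  monotone_mf ip M -> 0 < c ->
  M x1 (c^-1 *: (z1 - x1)) -> M x2 (c^-1 *: (z2 - x2)) ->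
  `|x1 - x2| <= `|z1 - z2|.
Proof.
move=> M_mono c_gt0 Mx1 Mx2; have := M_mono _ _ _ _ Mx1 Mx2.
rewrite -scalerBr (ipZr ipH) pmulr_rge0 ?invr_gt0 // => x_mono.
rewrite -(@ler_pXn2r _ 2) ?nnegrE ?normr_ge0 // -!(ip_norm ipH).
have := ip_le_mean ipH (x1 - x2) (z1 - z2).
move: x_mono; rewrite !(ipE ipH) !(ipC ipH z1) !(ipC ipH z2) (ipC ipH x2 x1).
lra.
Qed.

Lemma monotone_touch_uniq (Q : {linear Y -> Y}) (lam : R) x y :
  monotone_mf ip M -> 0 < lam -> (forall y, ip y (Q y) + lam * `|y| ^+ 2 <= 0) ->
  M x (Q x) -> M y (Q y) -> x = y.
Proof.
move=> M_mono lam_gt0 Q_diss Mx My; apply/eqP; rewrite -subr_eq0; apply/eqP.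
apply: (ipxx_le0_eq0 ipH); rewrite -(pmulr_rle0 _ lam_gt0).
have := M_mono _ _ _ _ Mx My; have := Q_diss (x - y).
by rewrite -linearB (ip_norm ipH); lra.
Qed.

End Resolvent.

Theorem corollary2p8 (R : realType) (Y : completeNormedModType R)
    (ip : Y -> Y -> R) (Q : {linear Y -> Y}) (lam : R) :
  hilbert_inner ip -> bounded_op Q -> 0 < lam ->
  (forall y : Y, ip y (Q y) + lam * `|y| ^+ 2 <= 0) ->
  forall M : Y -> set Y, maximally_monotone ip M -> touch_fun M Q.
Proof.
move=> ipH [C Q_le] lam_gt0 Q_diss M MM.
have D_gt0 : 0 < C ^+ 2 + lam ^+ 2.
  by have := sqr_ge0 C; have := exprn_gt0 2 lam_gt0; lra.
pose c := lam / (C ^+ 2 + lam ^+ 2).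
have c_gt0 : 0 < c by rewrite divr_gt0.
have c_lam : c * lam <= 1.
  by rewrite mulrAC ler_pdivrMr // mul1r -expr2; have := sqr_ge0 C; lra.
have c_C : c * C ^+ 2 <= lam.
  rewrite mulrAC ler_pdivrMr // mulrDr.
  by have := mulr_ge0 (ltW lam_gt0) (sqr_ge0 lam); lra.
have [J MJ] := choice (resolvent_exists ipH MM c_gt0).
have [x Jx] : exists x, J (x + c *: Q x) = x.
  apply: (@contraction_fixed_point _ _ _ (1 - c * lam / 2)) => [||x y]; first lra.
    by have := mulr_gt0 c_gt0 lam_gt0; lra.
  apply: le_trans (resolvent_nonexpansive ipH MM.1 c_gt0 (MJ _) (MJ _)) _.
  rewrite opprD addrACA -scalerBr -linearB.
  exact: (norm_add_scale_le ipH (ltW c_gt0) c_lam c_C (Q_diss _) (Q_le _)).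
have MQx : M x (Q x).
  have := MJ (x + c *: Q x); rewrite Jx addrAC subrr add0r.
  by rewrite scalerA mulVf ?gt_eqF // scale1r.
exists (x, Q x); apply/seteqP; split=> [[y v] [Myv vQy]|_ ->] //.
have {}vQy : v = Q y := vQy; subst v.
by rewrite (monotone_touch_uniq (x := y) ipH MM.1 lam_gt0 Q_diss Myv MQx).
Qed.
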